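(* Assume the general coarsening setting described in the context and let $r$ be a deterministic path with $P(R=r)>0$. If CAR(GCMP)-loc holds on $r$, i.e. $$\mathcal{L}^{(\theta,\psi)/(\theta_0,\psi_0)}_{\mathcal{R}|\mathcal{X}}=\mathcal{L}^{(\theta,\psi)/(\theta_0,\psi_0)}_{\mathcal{R}|\mathcal{X}^r}\quad\text{a.s. on }\{R=r\}\ \text{for all }(\theta,\psi),$$ then the mechanism leading to incomplete data is ignorable on $r$: for all $\theta$ and whatever $\psi_0$, $\mathcal{L}^{(\theta,\psi_0)/(\theta_0,\psi_0)}_{\mathcal{O}}=\mathcal{L}^{\theta/\theta_0}_{\mathcal{X}^r}$ a.s. on $\{R=r\}$.
   Context: Setting. On a measurable space $(\Omega,\mathcal{F})$ live two càdlàg stochastic processes: $X=(X_t)_{t\ge0}$ with values in $\mathbb{R}^d$ (path space a Skorohod space) and a response indicator process $R=(R_t)_{t\ge0}$ with values in $\{0,1\}$, $R_t=1$ meaning $X_t$ is observed. Let $\mathcal{X}=\sigma(X_t,t\ge0)$, $\mathcal{R}=\sigma(R_t,t\ge0)$, $\mathcal{F}=\mathcal{X}\vee\mathcal{R}$. A model is a family $\{P_{(\theta,\psi)}:(\theta,\psi)\in\Theta\times\Psi\}$ of mutually equivalent probability measures on $\mathcal{F}$ with reference measure $P_{(\theta_0,\psi_0)}$; the restriction of $P_{(\theta,\psi)}$ to $\mathcal{X}$ depends only on $\theta$ (denoted $P_\theta$). Non-informativeness: $P_{(\theta_1,\psi)}(A\mid\mathcal{X})=P_{(\theta_2,\psi)}(A\mid\mathcal{X})$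 a.s. for all $A\in\mathcal{R}$. For a sub-$\sigma$-field $\mathcal{G}$, $\mathcal{L}^{(\theta,\psi)/(\theta_0,\psi_0)}_{\mathcal{G}}$ is the Radon–Nikodym derivative $dP_{(\theta,\psi)}/dP_{(\theta_0,\psi_0)}$ restricted to $\mathcal{G}$; for $\mathcal{G}\subset\mathcal{X}$ it is written $\mathcal{L}^{\theta/\theta_0}_{\mathcal{G}}$. The conditional likelihood ratio is $\mathcal{L}_{\mathcal{Y}|\mathcal{G}}=\mathcal{L}_{\mathcal{G}\vee\mathcal{Y}}/\mathcal{L}_{\mathcal{G}}$. The observed $\sigma$-field is $\mathcal{O}=\sigma(R_tX_t,R_t,\ t\ge0)$. For a deterministic path $r$, $\{R=r\}=\{R_t=r_t\ \forall t\}$ and $\mathcal{X}^r=\sigma(r_tX_t,\ t\ge0)$. *)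

From HB Require Import structures.
From mathcomp Require Import all_boot all_order all_algebra.
From mathcomp Require Import all_classical all_reals all_analysis.
Set Implicit Arguments. Unset Strict Implicit. Unset Printing Implicit Defensive.
Import Order.TTheory GRing.Theory Num.Theory numFieldNormedType.Exports.
Local Open Scope classical_set_scope.
Local Open Scope ring_scope.

Section Defs.
Context {d : measure_display} {Omega : measurableType d} {R : realType}.

Definition cadlag (f : R -> R) : Prop :=
  (forall t : R, 0 <= t -> f x @[x --> t^'+] --> f t) /\
  (forall t : R, 0 < t -> cvg (f x @[x --> t^'-])).

Definition gen_by (I : Type) (C : set I) (f : I -> Omega -> R) : set (set Omega) :=
  [set A | exists2 i, C i & exists2 B : set R, measurable B & A = f i @^-1` B].

(* index set {(t, j) | t >= 0, j < n} for coordinates of an R^n-valued process *)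
Definition idx (n : nat) : set (R * 'I_n) := [set p | 0 <= p.1].

Definition join (G H : set (set Omega)) : set (set Omega) := <<s G `|` H >>.

Definition sigmaX (n : nat) (X : R -> Omega -> 'rV[R]_n) : set (set Omega) :=
  <<s gen_by (@idx n) (fun p w => X p.1 w ord0 p.2) >>.

Definition sigmaR (Rp : R -> Omega -> R) : set (set Omega) :=
  <<s gen_by [set t : R | 0 <= t] Rp >>.

Definition sigmaXr (n : nat) (r : R -> R) (X : R -> Omega -> 'rV[R]_n)
  : set (set Omega) :=
  <<s gen_by (@idx n) (fun p w => r p.1 * X p.1 w ord0 p.2) >>.

Definition sigmaO (n : nat) (X : R -> Omega -> 'rV[R]_n) (Rp : R -> Omega -> R)
  : set (set Omega) :=
  <<s gen_by (@idx n) (fun p w => Rp p.1 w * X p.1 w ord0 p.2)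
      `|` gen_by [set t : R | 0 <= t] Rp >>.

Definition eventR (Rp : R -> Omega -> R) (r : R -> R) : set Omega :=
  [set w | forall t, 0 <= t -> Rp t w = r t].

Definition G_measurable (G : set (set Omega)) (f : Omega -> R) : Prop :=
  forall B : set R, measurable B -> G (f @^-1` B).

Definition is_LR (G : set (set Omega)) (mu nu : probability Omega R)
  (L : Omega -> R) : Prop :=
  [/\ G_measurable G L, (forall w, 0 <= L w) &
      forall A, G A -> mu A = (\int[nu]_(w in A) (L w)%:E)%E].

Definition is_condprob (G : set (set Omega)) (mu : probability Omega R)
  (A : set Omega) (g : Omega -> R) : Prop :=
  [/\ G_measurable G g, (forall w, 0 <= g w) &
      forall B, G B -> mu (A `&` B) = (\int[mu]_(w in B) (g w)%:E)%E].

Definition ae_on (mu : probability Omega R) (S : set Omega) (f g : Omega -> R) : Prop :=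
  {ae mu, forall w, S w -> f w = g w}.

End Defs.

From HB Require Import structures.
From mathcomp Require Import all_boot all_order all_algebra.
From mathcomp Require Import all_classical all_reals all_analysis.
From mathcomp Require Import measurable_realfun.
Import Order.TTheory GRing.Theory Num.Theory numFieldNormedType.Exports.
Set Implicit Arguments. Unset Strict Implicit. Unset Printing Implicit Defensive.
Local Open Scope classical_set_scope.
Local Open Scope ring_scope.

(* The X-marginals do not depend on psi and, by non-informativeness, neither does
   the conditional law of R given X depend on theta; hence the X-likelihood ratio
   of P_(theta,psi) against P_(theta0,psi) is already its likelihood ratio on
   X ∨ R (uniqueness of measures on the pi-system of rectangles A ∩ B).
   Comparing with CAR-loc for (theta,psi) and for (theta0,psi), where the X- and
   X^r-ratios against P_(theta0,psi0) are 1, shows that on {R = r} the density of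
   P_(theta,psi) with respect to P_(theta0,psi) on X^r ∨ R is the X^r-likelihood
   ratio. Finally R_t X_t = r_t X_t on {R = r}, so there the traces of O and of
   X^r ∨ R coincide, and the O-likelihood ratio equals the X^r-likelihood ratio. *)

Section density.
Context d (T : measurableType d) (R : realType).
Local Open Scope ereal_scope.

Lemma ae_null_dominates (mu nu : {measure set T -> \bar R}) (P : T -> Prop) :
  nu `<< mu -> {ae mu, forall x, P x} -> {ae nu, forall x, P x}.
Proof.
move=> /null_content_dominatesP numu [N [mN muN0 PN]].
by exists N; split => //; exact: numu.
Qed.

Lemma integral_density (nu nu0 : {finite_measure set T -> \bar R}) (m : T -> R) :
  measurable_fun setT m -> (forall x, (0 <= m x)%R) ->
  (forall A, measurable A -> nu A = \int[nu0]_(x in A) (m x)%:E) ->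
  forall h : T -> R, measurable_fun setT h -> (forall x, (0 <= h x)%R) ->
  forall A, measurable A ->
  \int[nu]_(x in A) (h x)%:E = \int[nu0]_(x in A) (h x * m x)%:E.
Proof.
move=> mm m0 num h mh h0 A mA.
have numu : nu `<< nu0.
  apply/null_content_dominatesP => B mB nB.
  by rewrite num// null_set_integral//; apply/measurable_EFinP; exact: measurable_funTS.
have RN_m : ae_eq nu0 A (Radon_Nikodym_SigmaFinite.f nu nu0) (EFin \o m).
  apply: integral_ae_eq => //.
  - apply: (integrableS measurableT) => //.
    exact: Radon_Nikodym_SigmaFinite.f_integrable.
  - by apply/measurable_EFinP; exact: measurable_funTS.
  - by move=> E EA mE; rewrite -Radon_Nikodym_SigmaFinite.f_integral// num.
rewrite -(Radon_Nikodym_SigmaFinite.change_of_variables numu)//; last first.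
  by apply/measurable_EFinP; exact: measurable_funTS.
apply: ae_eq_integral => //.
- apply: emeasurable_funM; first by apply/measurable_EFinP; exact: measurable_funTS.
  apply: measurable_funTS.
  exact: measurable_int (Radon_Nikodym_SigmaFinite.f_integrable numu).
- by apply/measurable_EFinP; apply: measurable_funTS; exact: measurable_funM.
- by apply: filterS RN_m => x + Ax => /(_ Ax) /= ->; rewrite EFinM.
Qed.

Lemma integral_mrestr (mu : {finite_measure set T -> \bar R}) (B : set T)
    (mB : measurable B) (h : T -> R) :
  measurable_fun setT h -> (forall x, (0 <= h x)%R) ->
  forall A, measurable A ->
  \int[mrestr mu mB]_(x in A) (h x)%:E = \int[mu]_(x in A `&` B) (h x)%:E.
Proof.
move=> mh h0 A mA.
have indicB0 x : (0 <= \1_B x :> R)%R by rewrite indicE ler0n.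
have restr_indic C : measurable C ->
    mrestr mu mB C = \int[mu]_(x in C) (\1_B x)%:E.
  by move=> mC; rewrite integral_indic// setIC.
rewrite (integral_density (measurable_indic mB) indicB0 restr_indic mh h0 mA).
rewrite integral_mkcondr; apply: eq_integral => x _.
by rewrite /patch indicE; case: (x \in B); rewrite ?mulr1 ?mulr0.
Qed.

(* [mf] and [f0] only serve to infer the measure instance below. *)
Definition density_measure (nu : {measure set T -> \bar R}) (f : T -> R)
  (mf : measurable_fun setT f) (f0 : forall x, (0 <= f x)%R) : set T -> \bar R :=
  fun A => \int[nu]_(x in A) (f x)%:E.

Section density_measure.
Variables (nu : {measure set T -> \bar R}) (f : T -> R).
Hypotheses (mf : measurable_fun setT f) (f0 : forall x, (0 <= f x)%R).

Let density0 : density_measure nu mf f0 set0 = 0. Proof. exact: integral_set0. Qed.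

Let density_ge0 A : 0 <= density_measure nu mf f0 A.
Proof. by apply: integral_ge0 => x _; rewrite lee_fin. Qed.

Let density_sigma_additive : semi_sigma_additive (density_measure nu mf f0).
Proof.
apply: semi_sigma_additive_nng_induced; first exact/measurable_EFinP.
by move=> x; rewrite lee_fin.
Qed.

HB.instance Definition _ := isMeasure.Build _ _ _ (density_measure nu mf f0)
  density0 density_ge0 density_sigma_additive.

End density_measure.

End density.

Section G_measurable.
Context d (T : measurableType d) (R : realType).
Implicit Types (G H : set (set T)) (f g : T -> R).

Lemma G_measurableP G f :
  G_measurable <<s G >> f <-> measurable_fun setT (f : g_sigma_algebraType G -> R).
Proof.
split => [fG _ B mB|fG B mB]; first by rewrite setTI; exact: fG.
by have := fG measurableT B mB; rewrite setTI.
Qed.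

Lemma G_measurableS G H f : G `<=` H -> G_measurable G f -> G_measurable H f.
Proof. by move=> GH fG B mB; apply: GH; exact: fG. Qed.

Lemma G_measurableM G f g : G_measurable <<s G >> f -> G_measurable <<s G >> g ->
  G_measurable <<s G >> (fun x => f x * g x).
Proof. by move=> /G_measurableP fG /G_measurableP gG; exact/G_measurableP/measurable_funM. Qed.

Lemma G_measurable_cst G (c : R) : G_measurable <<s G >> (fun _ => c).
Proof. exact/G_measurableP/measurable_cst. Qed.

End G_measurable.

(* [Gm] only serves to infer the measure instances on [g_sigma_algebraType G]. *)
Definition mrestr_sigma d (T : measurableType d) (R : realType) (G : set (set T))
  (Gm : G `<=` measurable) (m : set T -> \bar R) : set (g_sigma_algebraType G) -> \bar R :=
  m.

Section sub_sigma_algebra.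
Context d (T : measurableType d) (R : realType) (G : set (set T)).
Hypothesis Gm : G `<=` measurable.
Local Notation TG := (g_sigma_algebraType G).
Local Open Scope ereal_scope.

Lemma g_sigma_sub_measurable : <<s G >> `<=` measurable.
Proof. exact: smallest_sub (@sigma_algebra_measurable _ T) Gm. Qed.

Lemma G_measurable_fun (f : T -> R) :
  G_measurable <<s G >> f -> measurable_fun setT f.
Proof. by move=> fG _ B mB; rewrite setTI; apply: g_sigma_sub_measurable; exact: fG. Qed.

Section mrestr_sigma_instance.
Variable m : {finite_measure set T -> \bar R}.

Let mrestr_sigma0 : mrestr_sigma Gm m set0 = 0. Proof. exact: measure0. Qed.

Let mrestr_sigma_ge0 A : 0 <= mrestr_sigma Gm m A. Proof. exact: measure_ge0. Qed.

Let mrestr_sigma_additive : semi_sigma_additive (mrestr_sigma Gm m).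
Proof.
move=> F mF tF mUF; apply: measure_semi_sigma_additive => //.
- by move=> n; apply: g_sigma_sub_measurable; exact: mF.
- exact: g_sigma_sub_measurable.
Qed.

HB.instance Definition _ := isMeasure.Build _ _ _ (mrestr_sigma Gm m)
  mrestr_sigma0 mrestr_sigma_ge0 mrestr_sigma_additive.

Let mrestr_sigma_fin : fin_num_fun (mrestr_sigma Gm m).
Proof. by move=> A mA; apply: fin_num_measure; exact: g_sigma_sub_measurable. Qed.

HB.instance Definition _ := Measure_isFinite.Build _ _ _ (mrestr_sigma Gm m)
  mrestr_sigma_fin.

End mrestr_sigma_instance.

Lemma integral_mrestr_sigma (m : {finite_measure set T -> \bar R}) (A : set T)
    (f : TG -> \bar R) :
  <<s G >> A -> measurable_fun setT f -> (forall x, 0 <= f x) ->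
  \int[mrestr_sigma Gm m]_(x in A) f x = \int[m]_(x in A) f x.
Proof.
move=> GA mf f0.
have mid : measurable_fun setT (id : T -> TG).
  by move=> _ B GB; rewrite setTI; exact: g_sigma_sub_measurable.
have -> : mrestr_sigma Gm m = pushforward m (id : T -> TG) by [].
by rewrite ge0_integral_pushforward//; exact: measurable_funTS.
Qed.

Lemma ae_mrestr_sigma (m : {finite_measure set T -> \bar R}) (P : T -> Prop) :
  {ae mrestr_sigma Gm m, forall x : TG, P x} -> {ae m, forall x, P x}.
Proof. by move=> [N [GN N0 NP]]; exists N; split => //; exact: g_sigma_sub_measurable. Qed.

Lemma EFin_G_measurable (f : T -> R) :
  G_measurable <<s G >> f -> measurable_fun setT (fun x : TG => (f x)%:E).
Proof. by move=> /G_measurableP fG; exact/measurable_EFinP. Qed.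

Lemma integral_density_sigma (nu nu0 : {finite_measure set T -> \bar R}) (m : T -> R) :
  G_measurable <<s G >> m -> (forall x, (0 <= m x)%R) ->
  (forall A, <<s G >> A -> nu A = \int[nu0]_(x in A) (m x)%:E) ->
  forall h : T -> R, G_measurable <<s G >> h -> (forall x, (0 <= h x)%R) ->
  forall A, <<s G >> A ->
  \int[nu]_(x in A) (h x)%:E = \int[nu0]_(x in A) (h x * m x)%:E.
Proof.
move=> mG m0 num h hG h0 A GA.
rewrite -(integral_mrestr_sigma _ GA) //; last exact: EFin_G_measurable.
rewrite -(integral_mrestr_sigma _ GA); first last.
- by move=> x; rewrite lee_fin mulr_ge0.
- exact: EFin_G_measurable (G_measurableM hG mG).
apply: (@integral_density _ TG R (mrestr_sigma Gm nu) (mrestr_sigma Gm nu0) m) => //.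
- exact/G_measurableP.
- by move=> B GB; rewrite /mrestr_sigma num// integral_mrestr_sigma//; exact: EFin_G_measurable.
- exact/G_measurableP.
Qed.

Lemma eq_integral_sigma (nu nu' : {finite_measure set T -> \bar R}) :
  (forall A, <<s G >> A -> nu A = nu' A) ->
  forall h : T -> R, G_measurable <<s G >> h -> (forall x, (0 <= h x)%R) ->
  forall A, <<s G >> A -> \int[nu]_(x in A) (h x)%:E = \int[nu']_(x in A) (h x)%:E.
Proof.
move=> nunu' h hG h0 A GA.
rewrite -!(integral_mrestr_sigma _ GA) //; try exact: EFin_G_measurable.
by apply: eq_measure_integral => B GB _; exact: nunu'.
Qed.

Lemma integral_ae_eq_sigma (nu : {finite_measure set T -> \bar R}) (D : set T)
    (f g : T -> R) : <<s G >> D ->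
  G_measurable <<s G >> f -> G_measurable <<s G >> g ->
  (forall x, (0 <= f x)%R) -> (forall x, (0 <= g x)%R) ->
  \int[nu]_(x in D) (f x)%:E < +oo ->
  (forall A, <<s G >> A -> A `<=` D ->
     \int[nu]_(x in A) (f x)%:E = \int[nu]_(x in A) (g x)%:E) ->
  {ae nu, forall x, D x -> f x = g x}.
Proof.
move=> GD fG gG f0 g0 fD_fin fg.
have : ae_eq (mrestr_sigma Gm nu) (D : set TG) (EFin \o f) (EFin \o g).
  apply: integral_ae_eq => //.
  - apply/integrableP; split; first by apply: measurable_funTS; exact: EFin_G_measurable.
    under eq_integral do rewrite gee0_abs ?lee_fin//.
    by rewrite integral_mrestr_sigma//; exact: EFin_G_measurable.
  - by apply: measurable_funTS; exact: EFin_G_measurable.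
  - move=> A AD GA; rewrite !integral_mrestr_sigma//; try exact: EFin_G_measurable.
    exact: fg.
move/ae_mrestr_sigma => -[N [mN N0 fgN]]; exists N; split => // x /= fgx.
by apply: fgN => /= fgEx; apply: fgx => Dx; case: (fgEx Dx).
Qed.

End sub_sigma_algebra.

Section likelihood_ratio.
Context d (T : measurableType d) (R : realType) (G : set (set T)).
Hypothesis Gm : G `<=` measurable.
Implicit Types (mu nu rho : probability T R) (L M : T -> R).
Local Open Scope ereal_scope.

Lemma is_LR_uniq mu nu L M : is_LR <<s G >> mu nu L -> is_LR <<s G >> mu nu M ->
  {ae nu, forall x, L x = M x}.
Proof.
move=> [LG L0 muL] [MG M0 muM].
have GT : <<s G >> setT by exact: (@measurableT _ (g_sigma_algebraType G)).
have L_fin : \int[nu]_(x in setT) (L x)%:E < +oo.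
  by rewrite -muL// probability_setT ltry.
apply: filterS (integral_ae_eq_sigma Gm GT LG MG L0 M0 L_fin _) => [x /(_ I)//|].
by move=> A GA _; rewrite -muL// muM.
Qed.

Lemma is_LR_eq1 mu nu L : (forall A, <<s G >> A -> mu A = nu A) ->
  is_LR <<s G >> mu nu L -> {ae nu, forall x, L x = 1%R}.
Proof.
move=> munu muL; apply: is_LR_uniq muL _; split => [||A GA].
- exact: G_measurable_cst.
- by move=> _; exact: ler01.
- rewrite munu// integral_cst ?mul1e//.
  exact: (g_sigma_sub_measurable Gm GA).
Qed.

Lemma is_LR_neq0 mu nu L : nu `<< mu ->
  is_LR <<s G >> mu nu L -> {ae nu, forall x, L x != 0%R}.
Proof.
move=> /null_content_dominatesP nu_mu [LG L0 muL].
have GL0 : <<s G >> (L @^-1` [set 0%R]) by apply: LG; exact: measurable_set1.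
have mL0 := g_sigma_sub_measurable Gm GL0.
exists (L @^-1` [set 0%R]); split => //; last by move=> x /= /negP/negbNE/eqP.
by apply: nu_mu => //; apply: eq_trans (muL _ GL0) _; apply: integral0_eq => x /= ->.
Qed.

Lemma is_LR_eq_ref mu nu nu' L : (forall A, <<s G >> A -> nu A = nu' A) ->
  is_LR <<s G >> mu nu L -> is_LR <<s G >> mu nu' L.
Proof.
move=> nunu' [LG L0 muL]; split => // A GA.
by rewrite muL// (eq_integral_sigma Gm nunu').
Qed.

Lemma is_LR_mul mu nu rho L M : is_LR <<s G >> mu nu L -> is_LR <<s G >> nu rho M ->
  is_LR <<s G >> mu rho (fun x => L x * M x)%R.
Proof.
move=> [LG L0 muL] [MG M0 nuM]; split => [||A GA].
- exact: G_measurableM.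
- by move=> x; rewrite mulr_ge0.
- by rewrite muL// (integral_density_sigma Gm MG M0 nuM LG L0).
Qed.

Lemma integral_condprob mu (B : set T) (g h : T -> R) : measurable B ->
  is_condprob <<s G >> mu B g ->
  G_measurable <<s G >> h -> (forall x, (0 <= h x)%R) ->
  forall A, <<s G >> A ->
  \int[mu]_(x in A) (h x * g x)%:E = \int[mu]_(x in A `&` B) (h x)%:E.
Proof.
move=> mB [gG g0 mu_g] hG h0 A GA.
have restr_g C : <<s G >> C -> mrestr mu mB C = \int[mu]_(x in C) (g x)%:E.
  by move=> GC; rewrite /mrestr setIC mu_g.
rewrite -(integral_density_sigma Gm gG g0 restr_g hG h0 GA).
rewrite integral_mrestr//; first exact: (G_measurable_fun Gm hG).
exact: (g_sigma_sub_measurable Gm GA).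
Qed.

End likelihood_ratio.

Section noninformative.
Context d (T : measurableType d) (R : realType) (G H : set (set T)).
Hypotheses (Gm : G `<=` measurable) (Hm : H `<=` measurable).
Local Open Scope ereal_scope.

Definition rectangles : set (set T) :=
  [set C | exists2 A, <<s G >> A & exists2 B, <<s H >> B & C = A `&` B].

Lemma rectangles_measurable : rectangles `<=` measurable.
Proof.
move=> _ [A GA [B HB ->]]; apply: measurableI.
- exact: (g_sigma_sub_measurable Gm GA).
- exact: (g_sigma_sub_measurable Hm HB).
Qed.

Lemma rectangles_setI_closed : setI_closed rectangles.
Proof.
move=> _ _ [A GA [B HB ->]] [A' GA' [B' HB' ->]].
exists (A `&` A'); first exact: (@measurableI _ (g_sigma_algebraType G)).
exists (B `&` B'); first exact: (@measurableI _ (g_sigma_algebraType H)).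
by rewrite setIACA.
Qed.

Lemma rectanglesT : rectangles setT.
Proof.
exists setT; first exact: (@measurableT _ (g_sigma_algebraType G)).
by exists setT; [exact: (@measurableT _ (g_sigma_algebraType H))|rewrite setIT].
Qed.

Lemma join_sub_rectangles : join <<s G >> <<s H >> `<=` <<s rectangles >>.
Proof.
have GT : <<s G >> setT := @measurableT _ (g_sigma_algebraType G).
have HT : <<s H >> setT := @measurableT _ (g_sigma_algebraType H).
apply: smallest_sub; first exact: smallest_sigma_algebra.
move=> C [GC|HC]; apply: sub_sigma_algebra.
- by exists C => //; exists setT => //; rewrite setIT.
- by exists setT => //; exists C => //; rewrite setTI.
Qed.

(* mu (A ∩ B) = int_A g1 dmu = int_A g1 L dnu = int_A g2 L dnu = int_(A ∩ B) L dnu *)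
Lemma noninformative_rectangle (mu nu : probability T R) (L g1 g2 : T -> R) A B :
  is_LR <<s G >> mu nu L -> <<s G >> A -> <<s H >> B ->
  is_condprob <<s G >> mu B g1 -> is_condprob <<s G >> nu B g2 ->
  {ae nu, forall x, g1 x = g2 x} ->
  mu (A `&` B) = \int[nu]_(x in A `&` B) (L x)%:E.
Proof.
move=> [LG L0 muL] GA HB g1B g2B g12.
have mA := g_sigma_sub_measurable Gm GA; have mB := g_sigma_sub_measurable Hm HB.
have [g1G g10 mu_g1] := g1B; have [g2G _ _] := g2B.
rewrite [in LHS]setIC mu_g1// (integral_density_sigma Gm LG L0 muL g1G g10 GA).
rewrite -(integral_condprob Gm mB g2B LG L0 GA).
apply: ae_eq_integral => //.
- apply/measurable_EFinP/measurable_funTS.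
  exact: (G_measurable_fun Gm (G_measurableM g1G LG)).
- apply/measurable_EFinP/measurable_funTS.
  exact: (G_measurable_fun Gm (G_measurableM LG g2G)).
- by apply: filterS g12 => x g12x _; rewrite g12x mulrC.
Qed.

Lemma noninformative_is_LR (mu nu : probability T R) (L : T -> R) :
  (forall B, <<s H >> B -> exists g1 g2 : T -> R,
     [/\ is_condprob <<s G >> mu B g1, is_condprob <<s G >> nu B g2 &
         {ae nu, forall x, g1 x = g2 x}]) ->
  is_LR <<s G >> mu nu L -> is_LR (join <<s G >> <<s H >>) mu nu L.
Proof.
move=> noninf LR_L; have [LG L0 _] := LR_L.
split => // [|C /join_sub_rectangles rectC].
  by apply: G_measurableS LG => A GA; apply: sub_sigma_algebra; left.
have mL := G_measurable_fun Gm LG.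
change (mu C = density_measure nu mL L0 C).
apply: (g_sigma_algebra_measure_unique rectangles rectangles_measurable (fun=> setT)
  (fun=> rectanglesT)) => //.
- by rewrite bigcup_const//; exists 0%N.
- exact: rectangles_setI_closed.
- move=> _ [A GA [B HB ->]]; have [g1 [g2 [g1B g2B g12]]] := noninf B HB.
  exact: noninformative_rectangle LR_L GA HB g1B g2B g12.
- by move=> _ /=; rewrite probability_setT ltry.
Qed.

End noninformative.

Lemma sigma_trace_sub d (T : measurableType d) (G H : set (set T)) (E : set T) :
  <<s H >> E -> (forall A, G A -> <<s H >> (A `&` E)) ->
  forall A, <<s G >> A -> <<s H >> (A `&` E).
Proof.
move=> HE GE; apply: (@smallest_sub _ _ _ [set A | <<s H >> (A `&` E)]) => //.
split => /=.
- by rewrite set0I; exact: (@measurable0 _ (g_sigma_algebraType H)).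
- move=> A HAE; rewrite setTD.
  have -> : ~` A `&` E = E `\` (A `&` E) by rewrite setDIr setDv setU0 setDE setIC.
  exact: (@measurableD _ (g_sigma_algebraType H)).
- move=> F HFE; rewrite setI_bigcupl.
  exact: (@bigcupT_measurable _ (g_sigma_algebraType H)).
Qed.

Lemma grid_cvg_right (R : realType) (t : R) : 0 <= t -> exists u : nat -> nat,
  (forall k, t < (u k)%:R / k.+1%:R) /\ (fun k => (u k)%:R / k.+1%:R) @ \oo --> t.
Proof.
move=> t0; exists (fun k => (Num.truncn (t * k.+1%:R)).+1); split.
  move=> k; have /andP[_ +] := truncn_itv (mulr_ge0 t0 (ler0n _ k.+1)).
  by rewrite ltr_pdivlMr.
apply: (@squeeze_cvgr _ _ _ _ (fun=> t) (fun k => t + k.+1%:R^-1)).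
- near=> k; have /andP[tk tk1] := truncn_itv (mulr_ge0 t0 (ler0n _ k.+1)).
  rewrite ler_pdivlMr// ltW//= ler_pdivrMr// mulrDl mulVf ?pnatr_eq0//.
  by rewrite -natr1 lerD2r.
- exact: cvg_cst.
- rewrite -[X in _ --> X]addr0; apply: cvgD; first exact: cvg_cst.
  exact: cvg_harmonic.
Unshelve. all: by end_near.
Qed.

Section coarsening.
Context d (Omega : measurableType d) (R : realType) (n : nat).
Variables (X : R -> Omega -> 'rV[R]_n) (Rp : R -> Omega -> R) (r : R -> R).

Local Notation genX := (gen_by (@idx R n) (fun p w => X p.1 w ord0 p.2)).
Local Notation genR := (gen_by [set t : R | 0 <= t] Rp).
Local Notation genXr := (gen_by (@idx R n) (fun p w => r p.1 * X p.1 w ord0 p.2)).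
Local Notation genRX := (gen_by (@idx R n) (fun p w => Rp p.1 w * X p.1 w ord0 p.2)).
Local Notation E := (eventR Rp r).

Lemma eventR_grid : (forall w, cadlag (fun t => Rp t w)) -> cadlag r ->
  E = \bigcap_k \bigcap_j [set w | Rp (j%:R / k.+1%:R) w = r (j%:R / k.+1%:R)].
Proof.
move=> cR cr; apply/seteqP; split => w /=.
  by move=> Ew k _ j _; apply: Ew; rewrite divr_ge0.
move=> Ew t t0; have [u [tu ut]] := grid_cvg_right t0.
have Rp_u := (cvg_at_rightP _ _ _).1 ((cR w).1 t t0) _ (conj tu ut).
have r_u := (cvg_at_rightP _ _ _).1 (cr.1 t t0) _ (conj tu ut).
have Ew_u k : Rp ((u k)%:R / k.+1%:R) w = r ((u k)%:R / k.+1%:R) by exact: Ew.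
by move: Rp_u; rewrite (funext Ew_u) => Rp_u; exact: (cvg_unique _ Rp_u r_u).
Qed.

Lemma sigmaR_eventR : (forall w, cadlag (fun t => Rp t w)) -> cadlag r ->
  sigmaR Rp E.
Proof.
move=> cR cr; rewrite eventR_grid//.
apply: (@bigcapT_measurable _ (g_sigma_algebraType _)) => k.
apply: (@bigcapT_measurable _ (g_sigma_algebraType _)) => j.
apply: sub_sigma_algebra; exists (j%:R / k.+1%:R); first by rewrite /= divr_ge0.
by exists [set r (j%:R / k.+1%:R)]; first exact: measurable_set1.
Qed.

Lemma eventR_preimage (p : R * 'I_n) (B : set R) : idx p ->
  (fun w => Rp p.1 w * X p.1 w ord0 p.2) @^-1` B `&` E =
  (fun w => r p.1 * X p.1 w ord0 p.2) @^-1` B `&` E.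
Proof.
move=> p0; apply/seteqP; split => w [/= Bw Ew]; split => //=.
- by rewrite -(Ew _ p0).
- by rewrite (Ew _ p0).
Qed.

Section trace.
Hypothesis R_E : sigmaR Rp E.

Lemma sigmaO_trace A : sigmaO X Rp A -> join (sigmaXr r X) (sigmaR Rp) (A `&` E).
Proof.
have J_E : join (sigmaXr r X) (sigmaR Rp) E by apply: sub_sigma_algebra; right.
move: A; apply: sigma_trace_sub => // A [[p p0 [B mB ->]]|RA].
  rewrite eventR_preimage//; apply: (@measurableI _ (g_sigma_algebraType _)) => //.
  by apply: sub_sigma_algebra; left; apply: sub_sigma_algebra; exists p => //; exists B.
apply: (@measurableI _ (g_sigma_algebraType _)) => //.
by apply: sub_sigma_algebra; right; exact: sub_sigma_algebra.
Qed.

Lemma sigmaO_eventR : sigmaO X Rp E.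
Proof.
apply: smallest_sub R_E; first exact: smallest_sigma_algebra.
by move=> B RB; apply: sub_sigma_algebra; right.
Qed.

Lemma sigmaXr_trace A : sigmaXr r X A -> sigmaO X Rp (A `&` E).
Proof.
have O_E := sigmaO_eventR.
move: A; apply: sigma_trace_sub => // A [p p0 [B mB ->]].
rewrite -eventR_preimage//; apply: (@measurableI _ (g_sigma_algebraType _)) => //.
by apply: sub_sigma_algebra; left; exists p => //; exists B.
Qed.

Lemma G_measurable_restrict_eventR (f : Omega -> R) :
  G_measurable (sigmaXr r X) f -> G_measurable (sigmaO X Rp) (f \_ E).
Proof.
move=> fXr; apply/G_measurableP.
apply/(@measurable_restrictT _ _ (g_sigma_algebraType (genRX `|` genR)) R _ f sigmaO_eventR).
move=> _ B mB.
by rewrite setIC; apply: sigmaXr_trace; exact: fXr.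
Qed.

End trace.

Lemma sigmaXr_sub_sigmaX : sigmaXr r X `<=` sigmaX X.
Proof.
apply: smallest_sub; first exact: smallest_sigma_algebra.
move=> _ [p p0 [B mB ->]]; apply: sub_sigma_algebra; exists p => //.
exists (( *%R (r p.1)) @^-1` B) => //.
by rewrite -[X in measurable X]setTI; exact: mulrl_measurable.
Qed.

Section measurability.
Hypothesis F_XR : measurable = join (sigmaX X) (sigmaR Rp).

Lemma sigmaXR_measurable : sigmaX X `|` sigmaR Rp `<=` measurable.
Proof. by rewrite F_XR; exact: sub_sigma_algebra. Qed.

Lemma genX_measurable : genX `<=` measurable.
Proof. by move=> A XA; apply: sigmaXR_measurable; left; exact: sub_sigma_algebra. Qed.

Lemma genR_measurable : genR `<=` measurable.
Proof. by move=> A RA; apply: sigmaXR_measurable; right; exact: sub_sigma_algebra. Qed.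

Lemma genXr_measurable : genXr `<=` measurable.
Proof.
move=> A XrA; apply: sigmaXR_measurable; left.
by apply: sigmaXr_sub_sigmaX; exact: sub_sigma_algebra.
Qed.

Lemma sigmaXrR_measurable : sigmaXr r X `|` sigmaR Rp `<=` measurable.
Proof.
by move=> A [XrA|RA]; apply: sigmaXR_measurable; [left; exact: sigmaXr_sub_sigmaX|right].
Qed.

Lemma genO_measurable : genRX `|` genR `<=` measurable.
Proof.
move=> A [[p p0 [B mB ->]]|]; last exact: genR_measurable.
have mRp : measurable_fun setT (Rp p.1).
  by move=> _ C mC; rewrite setTI; apply: genR_measurable; exists p.1 => //; exists C.
have mX : measurable_fun setT (fun w => X p.1 w ord0 p.2).
  by move=> _ C mC; rewrite setTI; apply: genX_measurable; exists p => //; exists C.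
by rewrite -[X in measurable X]setTI; exact: measurable_funM.
Qed.

End measurability.

Section ignorability.
Hypotheses (R_E : sigmaR Rp E) (F_XR : measurable = join (sigmaX X) (sigmaR Rp)).
Local Open Scope ereal_scope.

Lemma observed_LR_eventR (mu nu rho : probability Omega R) (LO L3 L4 M3 : Omega -> R) :
  is_LR (sigmaO X Rp) mu nu LO ->
  is_LR (join (sigmaXr r X) (sigmaR Rp)) mu rho L3 ->
  is_LR (join (sigmaXr r X) (sigmaR Rp)) nu rho M3 ->
  is_LR (sigmaXr r X) mu rho L4 ->
  {ae rho, forall w, E w -> L3 w = (L4 w * M3 w)%R} ->
  {ae nu, forall w, E w -> LO w = L4 w}.
Proof.
move=> [LO_O LO0 muLO] [L3J L30 muL3] [M3J M30 nuM3] [L4Xr L40 _] L3E.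
have Jm := sigmaXrR_measurable F_XR.
have L4J : G_measurable (join (sigmaXr r X) (sigmaR Rp)) L4.
  by apply: G_measurableS L4Xr => A XrA; apply: sub_sigma_algebra; left.
have L4E0 := @restrict_ge0 _ _ E L4 (fun w _ => L40 w).
have mE := g_sigma_sub_measurable (genO_measurable F_XR) (sigmaO_eventR R_E).
have LO_fin : \int[nu]_(w in E) (LO w)%:E < +oo.
  by rewrite -muLO; [exact: le_lt_trans (probability_le1 mu mE) (ltry _)|exact: sigmaO_eventR].
apply: filterS (integral_ae_eq_sigma (genO_measurable F_XR) (sigmaO_eventR R_E)
  LO_O (G_measurable_restrict_eventR R_E L4Xr) LO0 L4E0 LO_fin _).
  by move=> w + Ew => /(_ Ew) ->; rewrite patchT// inE.
move=> A OA AE.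
have JA : join (sigmaXr r X) (sigmaR Rp) A by rewrite -(setIidl AE); exact: sigmaO_trace.
have mA := g_sigma_sub_measurable Jm JA.
rewrite -muLO// muL3//.
transitivity (\int[rho]_(w in A) (L4 w * M3 w)%:E).
  apply: ae_eq_integral => //.
  - exact/measurable_EFinP/measurable_funTS/(G_measurable_fun Jm).
  - apply/measurable_EFinP/measurable_funTS.
    exact: (G_measurable_fun Jm (G_measurableM L4J M3J)).
  - by apply: filterS L3E => w + Aw => /(_ (AE w Aw)) ->.
rewrite -(integral_density_sigma Jm M3J M30 nuM3 L4J L40 JA).
by apply: eq_integral => w /[!inE] Aw; rewrite patchT// inE; exact: AE.
Qed.

End ignorability.

End coarsening.

Lemma car_loc_factor (K : fieldType) (l1 l2 l3 l4 m1 m2 m3 m4 : K) :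
  l2 != 0 -> l4 != 0 -> m2 = 1 -> m4 = 1 -> l1 = l2 * m1 ->
  l1 / l2 = l3 / l4 -> m1 / m2 = m3 / m4 -> l3 = l4 * m3.
Proof.
move=> l2N0 l4N0 -> -> ->; rewrite !divr1 [l2 * m1]mulrC mulfK// => -> <-.
by rewrite mulrC divfK.
Qed.

Theorem theorem4 (d : measure_display) (Omega : measurableType d) (R : realType)
  (n : nat) (X : R -> Omega -> 'rV[R]_n) (Rp : R -> Omega -> R)
  (Theta Psi : Type) (P : Theta -> Psi -> probability Omega R)
  (theta0 : Theta) (psi0 : Psi) (r : R -> R) :
  (* càdlàg paths; R takes values in {0,1} *)
  (forall (w : Omega) (j : 'I_n), cadlag (fun t => X t w ord0 j)) ->
  (forall w : Omega, cadlag (fun t => Rp t w)) ->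
  (forall t (w : Omega), 0 <= t -> Rp t w = 0 \/ Rp t w = 1) ->
  (* F = X \/ R *)
  (@measurable d Omega) = join (sigmaX X) (sigmaR Rp) ->
  (* mutually equivalent *)
  (forall th ps th' ps' (A : set Omega), measurable A ->
     (P th ps A = 0%E <-> P th' ps' A = 0%E)) ->
  (* the restriction of P_(theta,psi) to X depends only on theta *)
  (forall th ps ps' (A : set Omega), sigmaX X A -> P th ps A = P th ps' A) ->
  (* non-informativeness *)
  (forall th1 th2 ps (A : set Omega), sigmaR Rp A ->
     exists g1 g2 : Omega -> R,
       [/\ is_condprob (sigmaX X) (P th1 ps) A g1,
           is_condprob (sigmaX X) (P th2 ps) A g2 &
           {ae P theta0 psi0, forall w, g1 w = g2 w}]) ->
  (* r is a deterministic path of the response process with P(R = r) > 0 *)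
  cadlag r -> (forall t, 0 <= t -> r t = 0 \/ r t = 1) ->
  (0 < P theta0 psi0 (eventR Rp r))%E ->
  (* CAR(GCMP)-loc on r *)
  (forall th ps, exists L1 L2 L3 L4 : Omega -> R,
     [/\ is_LR (join (sigmaX X) (sigmaR Rp)) (P th ps) (P theta0 psi0) L1,
         is_LR (sigmaX X) (P th ps) (P theta0 psi0) L2,
         is_LR (join (sigmaXr r X) (sigmaR Rp)) (P th ps) (P theta0 psi0) L3,
         is_LR (sigmaXr r X) (P th ps) (P theta0 psi0) L4 &
         ae_on (P theta0 psi0) (eventR Rp r)
           (fun w => L1 w / L2 w) (fun w => L3 w / L4 w)]) ->
  (* ignorability on r *)
  forall (th : Theta) (ps : Psi) (LO LXr : Omega -> R),
    is_LR (sigmaO X Rp) (P th ps) (P theta0 ps) LO ->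
    is_LR (sigmaXr r X) (P th ps) (P theta0 ps) LXr ->
    ae_on (P theta0 psi0) (eventR Rp r) LO LXr.
Proof.
move=> _ cR _ F_XR equiv marg noninf cr _ _ CAR th ps LO LXr LO_O LXr_Xr.
have Xm := genX_measurable F_XR; have Xrm := genXr_measurable (r := r) F_XR.
have null_dom a b a' b' : P a b `<< P a' b'.
  by apply/null_content_dominatesP => N mN /(equiv _ _ a b N mN).
have margXr a b b' A : sigmaXr r X A -> P a b A = P a b' A.
  by move=> /sigmaXr_sub_sigmaX; exact: marg.
have [L1 [L2 [L3 [L4 [L1F L2X L3J L4Xr car]]]]] := CAR th ps.
have [M1 [M2 [M3 [M4 [M1F M2X M3J M4Xr car0]]]]] := CAR theta0 ps.
have L1E : {ae P theta0 psi0, forall w, L1 w = L2 w * M1 w}.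
  have XRm := sigmaXR_measurable F_XR.
  apply: (is_LR_uniq XRm L1F (is_LR_mul XRm _ M1F)).
  apply: (noninformative_is_LR Xm (genR_measurable F_XR) _ (is_LR_eq_ref Xm (marg _ _ _) L2X)).
  move=> B RB; have [g1 [g2 [g1B g2B g12]]] := noninf th theta0 ps B RB.
  by exists g1, g2; split => //; exact: ae_null_dominates (null_dom _ _ _ _) g12.
have L3E : {ae P theta0 psi0, forall w, eventR Rp r w -> L3 w = L4 w * M3 w}.
  have M2_1 := is_LR_eq1 Xm (marg _ _ _) M2X.
  have M4_1 := is_LR_eq1 Xrm (margXr _ _ _) M4Xr.
  have L2N0 := is_LR_neq0 Xm (null_dom _ _ _ _) L2X.
  have L4N0 := is_LR_neq0 Xrm (null_dom _ _ _ _) L4Xr.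
  near=> w => Ew; exact: (car_loc_factor (near L2N0 w _) (near L4N0 w _)
    (near M2_1 w _) (near M4_1 w _) (near L1E w _) (near car w _ Ew) (near car0 w _ Ew)).
have LO_L4 : {ae P theta0 psi0, forall w, eventR Rp r w -> LO w = L4 w}.
  exact: ae_null_dominates (null_dom _ _ _ _)
    (observed_LR_eventR (sigmaR_eventR cR cr) F_XR LO_O L3J M3J L4Xr L3E).
have L4_LXr := is_LR_uniq Xrm L4Xr (is_LR_eq_ref Xrm (margXr _ _ _) LXr_Xr).
by near=> w => Ew; exact: (eq_trans (near LO_L4 w _ Ew) (near L4_LXr w _)).
Unshelve. all: by end_near.
Qed.
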